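(* Let $\mathbf a\in\mathbb{R}^{\mathbb{N}}$ satisfy: (1) $\mathbf a\ge 0$, $\Delta\mathbf a\le 0$ and $(\Delta\mathbf a)_1<0$; and (2) $\Delta^2\mathbf a\ge 0$ and $(\Delta^2\mathbf a)_1>0$. Then the linear centrality $f^{\mathbf a}$ is rank monotone.
   Context: Graphs are finite directed graphs; $d_G(x,y)$ is the shortest directed path length from $x$ to $y$ ($\infty$ if none). The linear centrality is $f^{\mathbf a}_G(i)=\sum_{z\in V_G,\ d_G(z,i)<\infty}a_{d_G(z,i)}$. For a sequence $\mathbf a$, $\Delta\mathbf a$ is the sequence with $(\Delta\mathbf a)_0=0$ and $(\Delta\mathbf a)_i=a_{i+1}-a_i$ for $i>0$; $\Delta^2\mathbf a=\Delta(\Delta\mathbf a)$; $\mathbf a\ge0$ ($\le0$) means every entry is $\ge0$ ($\le 0$). For a graph $G$ and distinct nodes $x,y$ with $(x,y)\notin E_G$, let $G'$ be $G$ with the arc $x\to y$ added. A centrality $f$ is rank monotone if for all such $G,x,y$ and every node $w\ne y$: if $f_G(w)\le f_G(y)$ then $f_{G'}(w)<f_{G'}(y)$. *)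

From HB Require Import structures.
From mathcomp Require Import all_boot all_order all_algebra.
Set Implicit Arguments. Unset Strict Implicit. Unset Printing Implicit Defensive.
Import Order.TTheory GRing.Theory Num.Theory.

Fixpoint walkn (T : finType) (E : rel T) (n : nat) (z i : T) : bool :=
  match n with
  | 0 => z == i
  | n'.+1 => [exists w, E z w && walkn E n' w i]
  end.

(* d_G(z,i) < oo  iff  i is reachable from z (reflexive-transitive closure). *)
Definition reachable (T : finType) (E : rel T) (z i : T) : bool := connect E z i.

(* d_G(z,i): the least n with a walk of length n from z to i.  A shortest walk
   is a simple path, hence has length < #|T|, so searching 0..#|T|-1 suffices;
   the value is only used when z reaches i. *)
Definition dist (T : finType) (E : rel T) (z i : T) : nat :=
  find (fun n => walkn E n z i) (iota 0 #|T|).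

Definition lin_centrality (R : numDomainType) (a : nat -> R)
  (T : finType) (E : rel T) (i : T) : R :=
  (\sum_(z | reachable E z i) a (dist E z i))%R.

Definition Delta (R : zmodType) (a : nat -> R) (i : nat) : R :=
  if i is 0 then 0%R else (a i.+1 - a i)%R.

Definition add_arc (T : finType) (E : rel T) (x y : T) : rel T :=
  fun u v => E u v || ((u == x) && (v == y)).

Definition rank_monotone (R : numDomainType)
  (f : forall T : finType, rel T -> T -> R) : Prop :=
  forall (T : finType) (E : rel T) (x y : T),
    x != y -> ~~ E x y ->
    forall w : T, w != y ->
      (f T E w <= f T E y)%R -> (f T (add_arc E x y) w < f T (add_arc E x y) y)%R.

From HB Require Import structures.
From mathcomp Require Import all_boot all_order all_algebra.
From mathcomp Require Import zify lra.
Import Order.TTheory GRing.Theory Num.Theory.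
Set Implicit Arguments. Unset Strict Implicit.

(* Adding the arc x -> y can only shorten distances, and a distance to w that
   does shrink is realised by a shortest path through x -> y followed by a
   shortest path from y to w.  Compare, source by source, the gain
   a_{d'(z,w)} - a_{d(z,w)} with the gain a_{d'(z,y)} - a_{d(z,y)}: writing
   p = d'(z,y) = d(z,x) + 1, k = d(y,w) and q = d(z,y) >= p, the first is at
   most a_{p+k} - a_{q+k} (a is nonincreasing and d(z,w) <= q + k), which
   convexity bounds by a_p - a_q.  For z = x we have p = 1 < q and k > 0, and
   strict convexity at 1 makes the inequality strict, so y gains strictly
   more than w in total. *)

Section Walks.
Variables (T : finType) (E : rel T).

Lemma walkn_connect n z v : walkn E n z v -> connect E z v.
Proof.
elim: n z => [|n IHn] z /=; first by move/eqP->.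
by case/existsP=> u /andP[Ezu /IHn]; apply: connect_trans; apply: connect1.
Qed.

Lemma walkn_cat m n z u v :
  walkn E m z u -> walkn E n u v -> walkn E (m + n) z v.
Proof.
elim: m z => [|m IHm] z /=; first by move/eqP->.
case/existsP=> w /andP[Ezw Hw] Hn; apply/existsP; exists w.
by rewrite Ezw IHm.
Qed.

Lemma path_walkn p z : path E z p -> walkn E (size p) z (last z p).
Proof.
elim: p z => [|u p IHp] z //= /andP[Ezu Hp].
by apply/existsP; exists u; rewrite Ezu IHp.
Qed.

Lemma connect_walkn_lt_card z v :
  connect E z v -> exists2 n, n < #|T| & walkn E n z v.
Proof.
case/connectP=> p Hp ->; case/shortenP: Hp => p' Hp' uniq_p' _.
exists (size p'); last exact: path_walkn.
by have := max_card (mem (z :: p')); rewrite (card_uniqP uniq_p').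
Qed.

Lemma has_walkn z v :
  connect E z v -> has (fun n => walkn E n z v) (iota 0 #|T|).
Proof.
by case/connect_walkn_lt_card=> n ltn Hn; apply/hasP; exists n; rewrite ?mem_iota.
Qed.

Lemma dist_lt_card z v : connect E z v -> dist E z v < #|T|.
Proof. by move/has_walkn; rewrite has_find size_iota. Qed.

Lemma dist_walkn z v : connect E z v -> walkn E (dist E z v) z v.
Proof.
move=> Ezv; have := nth_find 0 (has_walkn Ezv).
by rewrite nth_iota // dist_lt_card.
Qed.

Lemma dist_le n z v : walkn E n z v -> dist E z v <= n.
Proof.
move=> Hn; have ltd := dist_lt_card (walkn_connect Hn).
have [ltn|] := ltnP n #|T|; last exact: leq_trans (ltnW ltd).
rewrite leqNgt; apply/negP=> /(before_find 0).
by rewrite nth_iota // add0n Hn.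
Qed.

Lemma dist_xx z : dist E z z = 0.
Proof. by apply/eqP; rewrite -leqn0; apply: dist_le; rewrite /= eqxx. Qed.

Lemma dist_gt0 z v : z != v -> connect E z v -> 0 < dist E z v.
Proof.
move=> zv /dist_walkn; case: (dist E z v) => //= /eqP zv'.
by rewrite zv' eqxx in zv.
Qed.

Lemma dist_gt1 z v : z != v -> ~~ E z v -> connect E z v -> 1 < dist E z v.
Proof.
move=> zv Ezv Hc; have := dist_gt0 zv Hc; have := dist_walkn Hc.
case: (dist E z v) => [|[|n]] //= /existsP[u /andP[Ezu /eqP uv]].
by rewrite -uv Ezu in Ezv.
Qed.

Lemma dist_triangle z u v :
  connect E z u -> connect E u v -> dist E z v <= dist E z u + dist E u v.
Proof. by move=> /dist_walkn Hzu /dist_walkn Huv; exact: dist_le (walkn_cat Hzu Huv). Qed.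

End Walks.

Lemma sub_walkn (T : finType) (E1 E2 : rel T) n z v :
  subrel E1 E2 -> walkn E1 n z v -> walkn E2 n z v.
Proof.
move=> E12; elim: n z => [|n IHn] z //= /existsP[u /andP[Ezu Hu]].
by apply/existsP; exists u; rewrite E12 // IHn.
Qed.

Section AddArc.
Variables (T : finType) (E : rel T) (x y : T).
Local Notation E' := (add_arc E x y).

Lemma add_arc_sub : subrel E E'.
Proof. by move=> u v; rewrite /add_arc => ->. Qed.

Lemma walkn_add_arc_via m n z v :
  walkn E m z x -> walkn E n y v -> walkn E' (m.+1 + n) z v.
Proof.
move=> Hm Hn; have Exy : walkn E' 1 x y.
  by apply/existsP; exists y; rewrite /add_arc !eqxx orbT.
rewrite -addn1; apply: walkn_cat (sub_walkn add_arc_sub Hn).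
exact: walkn_cat (sub_walkn add_arc_sub Hm) Exy.
Qed.

Lemma walkn_add_arc n z v : walkn E' n z v ->
  walkn E n z v \/ exists m k, [/\ m.+1 + k <= n, walkn E m z x & walkn E k y v].
Proof.
elim: n z => [|n IHn] z /=; first by left.
case/existsP=> u /andP[/orP[Ezu|/andP[/eqP-> /eqP->]] /IHn].
- case=> [Hu|[m [k [le_mk Hm Hk]]]].
    by left; apply/existsP; exists u; rewrite Ezu.
  right; exists m.+1, k; split=> //.
  by apply/existsP; exists u; rewrite Ezu.
- case=> [Hn|[m [k [le_mk _ Hk]]]]; right.
    by exists 0, n; split=> /=.
  by exists 0, k; split=> //=; lia.
Qed.

Lemma connect_add_arc z v : connect E z v -> connect E' z v.
Proof. by apply: connect_sub => u w /add_arc_sub /connect1. Qed.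

Lemma dist_add_arc_le z v : connect E z v -> dist E' z v <= dist E z v.
Proof. by move/dist_walkn/(sub_walkn add_arc_sub)/dist_le. Qed.

Lemma dist_add_arc_via z v : connect E z x -> connect E y v ->
  connect E' z v /\ dist E' z v <= (dist E z x).+1 + dist E y v.
Proof.
move=> /dist_walkn Hzx /dist_walkn Hyv; have Hzv := walkn_add_arc_via Hzx Hyv.
by split; [exact: walkn_connect Hzv | exact: dist_le Hzv].
Qed.

Lemma dist_add_arc_cases z v : connect E' z v ->
  (connect E z v /\ dist E' z v = dist E z v) \/
  [/\ connect E z x, connect E y v & dist E' z v = (dist E z x).+1 + dist E y v].
Proof.
move=> /dist_walkn /walkn_add_arc [Hzv|[m [k [le_mk Hm Hk]]]].
  have Ezv := walkn_connect Hzv; left; split=> //.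
  by apply/eqP; rewrite eqn_leq dist_add_arc_le // dist_le.
have [Ezx Eyv] := (walkn_connect Hm, walkn_connect Hk).
have [_ le_via] := dist_add_arc_via Ezx Eyv.
have := dist_le Hm; have := dist_le Hk; right; split=> //; lia.
Qed.

End AddArc.

Local Open Scope ring_scope.

Section ConvexSequence.
Variables (R : realFieldType) (a : nat -> R).
Hypothesis a_nonincr : forall i, (0 < i)%N -> a i.+1 <= a i.
Hypothesis a_convex : forall i, (0 < i)%N -> a i.+1 - a i <= a i.+2 - a i.+1.

Lemma nonincr_le i j : (0 < i)%N -> (i <= j)%N -> a j <= a i.
Proof.
move=> i_gt0 /subnK <-; elim: (j - i)%N => [|m IHm] //.
by rewrite addSn; apply: le_trans IHm; apply: a_nonincr; rewrite addn_gt0 i_gt0 orbT.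
Qed.

Lemma convex_step_le i j : (0 < i)%N -> (i <= j)%N -> a i.+1 - a i <= a j.+1 - a j.
Proof.
move=> i_gt0 /subnK <-; elim: (j - i)%N => [|m IHm] //.
by rewrite addSn; apply: le_trans IHm _; apply: a_convex; rewrite addn_gt0 i_gt0 orbT.
Qed.

Lemma convex_shift_le p q k :
  (0 < p)%N -> (p <= q)%N -> a (p + k) - a (q + k) <= a p - a q.
Proof.
move=> p_gt0 le_pq; elim: k => [|k IHk]; first by rewrite !addn0.
have := @convex_step_le (p + k)%N (q + k)%N; rewrite !addnS.
by rewrite addn_gt0 p_gt0 leq_add2r le_pq => /(_ isT isT); lra.
Qed.

Lemma convex_shift_lt q k : a 2 - a 1 < a 3 - a 2 ->
  (0 < k)%N -> (1 < q)%N -> a (1 + k) - a (q + k) < a 1 - a q.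
Proof.
move=> strict_at1 k_gt0 q_gt1.
have := @convex_step_le 2 k.+1 isT k_gt0.
have := @convex_shift_le 2 q k isT q_gt1.
by rewrite add1n addSn; lra.
Qed.

End ConvexSequence.

Definition centrality_term (R : numDomainType) (a : nat -> R)
    (T : finType) (E : rel T) (z v : T) : R :=
  if reachable E z v then a (dist E z v) else 0.

Definition arc_gain (R : numDomainType) (a : nat -> R)
    (T : finType) (E : rel T) (x y z v : T) : R :=
  centrality_term a (add_arc E x y) z v - centrality_term a E z v.

Lemma lin_centralityE (R : numDomainType) (a : nat -> R) (T : finType) (E : rel T) v :
  lin_centrality a E v = \sum_z centrality_term a E z v.
Proof. by rewrite /lin_centrality big_mkcond. Qed.

Section Gains.
Variables (R : realFieldType) (a : nat -> R).
Hypothesis a_ge0 : forall i, 0 <= a i.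
Hypothesis a_nonincr : forall i, (0 < i)%N -> a i.+1 <= a i.
Hypothesis a_convex : forall i, (0 < i)%N -> a i.+1 - a i <= a i.+2 - a i.+1.
Variables (T : finType) (E : rel T) (x y : T).
Local Notation E' := (add_arc E x y).

Lemma centrality_term_connect (F : rel T) z v :
  connect F z v -> centrality_term a F z v = a (dist F z v).
Proof. by rewrite /centrality_term /reachable => ->. Qed.

Lemma centrality_term_disconnect (F : rel T) z v :
  ~~ connect F z v -> centrality_term a F z v = 0.
Proof. by rewrite /centrality_term /reachable => /negbTE ->. Qed.

Lemma centrality_term_ge0 (F : rel T) z v : 0 <= centrality_term a F z v.
Proof. by rewrite /centrality_term; case: ifP => _; [exact: a_ge0 | exact: lexx]. Qed.

Lemma arc_gain_ge0 z v : 0 <= arc_gain a E x y z v.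
Proof.
rewrite subr_ge0; have [Ezv|Ezv] := boolP (connect E z v); last first.
  by rewrite centrality_term_disconnect // centrality_term_ge0.
rewrite !centrality_term_connect ?connect_add_arc //.
have [<-|zv] := eqVneq z v; first by rewrite !dist_xx.
by apply: (nonincr_le a_nonincr); rewrite ?dist_add_arc_le ?dist_gt0 ?connect_add_arc.
Qed.

Lemma arc_gain_gt0_shortcut z w : 0 < arc_gain a E x y z w ->
  [/\ connect E y w,
      centrality_term a E' z w = a ((dist E z x).+1 + dist E y w),
      centrality_term a E' z y = a (dist E z x).+1 &
      if connect E z y then
        ((dist E z x).+1 <= dist E z y)%N /\
        a (dist E z y + dist E y w) <= centrality_term a E z w
      else centrality_term a E z y = 0].
Proof.
move=> gain_gt0; have [Ezw'|Ezw'] := boolP (connect E' z w); last first.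
  rewrite /arc_gain centrality_term_disconnect // in gain_gt0.
  by have := centrality_term_ge0 E z w; lra.
have [[Ezw dist_eq]|[Ezx Eyw dist_via]] := dist_add_arc_cases Ezw'.
  by rewrite /arc_gain !centrality_term_connect // dist_eq subrr ltxx in gain_gt0.
have [Ezy' le_zy'] := dist_add_arc_via Ezx (connect0 E y).
rewrite dist_xx addn0 in le_zy'.
have dist_zy' : dist E' z y = (dist E z x).+1.
  have := dist_triangle Ezy' (connect_add_arc x y Eyw).
  by have := dist_add_arc_le x y Eyw; rewrite dist_via; lia.
split=> //; first by rewrite centrality_term_connect // dist_via.
  by rewrite centrality_term_connect // dist_zy'.
have [Ezy|Ezy] := boolP (connect E z y); last exact: centrality_term_disconnect.
have Ezw := connect_trans Ezy Eyw.
have le_zw' := dist_add_arc_le x y Ezw; rewrite dist_via in le_zw'.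
split; first by rewrite -dist_zy' dist_add_arc_le.
rewrite centrality_term_connect //; apply: (nonincr_le a_nonincr).
  exact: leq_trans le_zw'.
exact: dist_triangle.
Qed.

Lemma arc_gain_le_target z w : arc_gain a E x y z w <= arc_gain a E x y z y.
Proof.
have [le0|/arc_gain_gt0_shortcut[_ gain_w gain_y]] := lerP (arc_gain a E x y z w) 0.
  exact: le_trans le0 (arc_gain_ge0 z y).
rewrite /arc_gain gain_w gain_y; case: ifP => [Ezy [le_pq le_w]|_ ->].
  rewrite [centrality_term _ E z y]centrality_term_connect //.
  by have := convex_shift_le a_convex (dist E y w) (ltn0Sn _) le_pq; lra.
have := centrality_term_ge0 E z w.
by have := nonincr_le a_nonincr (ltn0Sn _) (leq_addr (dist E y w) (dist E z x).+1); lra.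
Qed.

Hypothesis a_decr1 : a 2 < a 1.
Hypothesis a_strictly_convex1 : a 2 - a 1 < a 3 - a 2.

Lemma arc_gain_lt_target w : x != y -> ~~ E x y -> w != y ->
  arc_gain a E x y x w < arc_gain a E x y x y.
Proof.
move=> xy nExy wy.
have gain_y : centrality_term a E' x y = a 1.
  have [Exy' le_xy'] := dist_add_arc_via (connect0 E x) (connect0 E y).
  rewrite !dist_xx in le_xy'; rewrite centrality_term_connect //.
  by congr a; apply/eqP; rewrite eqn_leq le_xy' dist_gt0.
have le_y : centrality_term a E x y <= a 2.
  have [Exy|Exy] := boolP (connect E x y); last by rewrite centrality_term_disconnect.
  by rewrite centrality_term_connect // (nonincr_le a_nonincr) // dist_gt1.
have [le0|/arc_gain_gt0_shortcut[Eyw gain_w _]] := lerP (arc_gain a E x y x w) 0.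
  by rewrite /arc_gain gain_y in le0 *; move: a_decr1 le0 le_y; lra.
have k_gt0 : (0 < dist E y w)%N by rewrite dist_gt0 // eq_sym.
rewrite /arc_gain gain_w gain_y dist_xx; case: ifP => [Exy [_ le_w]|_ ->].
  rewrite [centrality_term _ E x y]centrality_term_connect //.
  by have := convex_shift_lt a_convex a_strictly_convex1 k_gt0 (dist_gt1 xy nExy Exy); lra.
have := centrality_term_ge0 E x w.
by have := @nonincr_le _ _ a_nonincr 2 (dist E y w).+1 isT k_gt0; move: a_decr1; lra.
Qed.

End Gains.

Theorem proposition4 (R : realFieldType) (a : nat -> R) :
  (forall i, 0 <= a i) ->
  (forall i, Delta a i <= 0) ->
  Delta a 1 < 0 ->
  (forall i, 0 <= Delta (Delta a) i) ->
  0 < Delta (Delta a) 1 ->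
  rank_monotone (fun T E i => lin_centrality a (T:=T) E i).
Proof.
move=> a_ge0 Da_le0 Da1_lt0 D2a_ge0 D2a1_gt0 T E x y xy nExy w wy.
have a_nonincr i : (0 < i)%N -> a i.+1 <= a i.
  by case: i => // i _; move: (Da_le0 i.+1) => /=; lra.
have a_convex i : (0 < i)%N -> a i.+1 - a i <= a i.+2 - a i.+1.
  by case: i => // i _; move: (D2a_ge0 i.+1) => /=; lra.
have a_decr1 : a 2 < a 1 by move: Da1_lt0 => /=; lra.
have a_strictly_convex1 : a 2 - a 1 < a 3 - a 2 by move: D2a1_gt0 => /=; lra.
rewrite /= !lin_centralityE => le_wy.
suff : \sum_z arc_gain a E x y z w < \sum_z arc_gain a E x y z y.
  by rewrite !sumrB; lra.
rewrite (bigD1 x) // [X in _ < X](bigD1 x) //=; apply: ltr_leD.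
  exact: arc_gain_lt_target.
by apply: ler_sum => z _; apply: arc_gain_le_target.
Qed.
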